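(* Let $h$ and $k$ be positive integers. If $A$ is a set of $k$ nonnegative integers with $\ell_h(A)=n_h(k)$, then $\operatorname{diam}(A)\le n_h(k)$.
   Context: $[0,n]=\{0,1,\ldots,n\}$. $hA=\{a_1+\cdots+a_h: a_i\in A\}$ (summands not necessarily distinct). For a nonempty finite $A\subseteq\mathbf{N}_0=\{0,1,2,\ldots\}$ with $0\in A$, $\ell_h(A)$ is the largest integer $n\ge0$ with $[0,n]\subseteq hA$ (undefined if $0\notin A$). $n_h(k)=\max\{\ell_h(A): A\subseteq\mathbf{N}_0, |A|=k\}$ (over sets where $\ell_h$ is defined). $\operatorname{diam}(A)=\sup\{|a-a'|: a,a'\in A\}$. *)

From mathcomp Require Import all_boot all_order.
From mathcomp Require Import finmap.
Set Implicit Arguments. Unset Strict Implicit. Unset Printing Implicit Defensive.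
Local Open Scope fset_scope.

Definition in_sumset (h : nat) (A : {fset nat}) (m : nat) : Prop :=
  exists s : seq nat, [/\ size s = h, all (fun a => a \in A) s & sumn s = m].

Definition interval_in_sumset (h : nat) (A : {fset nat}) (n : nat) : Prop :=
  forall m, m <= n -> in_sumset h A m.

(* is_ell h A n : n = l_h(A), the largest n >= 0 with [0,n] in hA
   (only meaningful when 0 \in A). *)
Definition is_ell (h : nat) (A : {fset nat}) (n : nat) : Prop :=
  0 \in A /\ interval_in_sumset h A n /\
  (forall n', interval_in_sumset h A n' -> n' <= n).

Definition is_nh (h k : nat) (N : nat) : Prop :=
  (exists B : {fset nat}, #|` B| = k /\ is_ell h B N) /\
  (forall (B : {fset nat}) (l : nat), #|` B| = k -> is_ell h B l -> l <= N).

(* diam A = sup { |a - a'| : a, a' in A } (truncated subtraction suffices). *)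
Definition diam (A : {fset nat}) : nat :=
  \max_(a <- A) \max_(b <- A) (a - b).

(* If some a in A exceeded N = l_h(A), then N + 1 is not in A (else 0 + ... + 0 + (N + 1)
   would extend [0, N] inside hA), and the k-element set obtained from A by replacing a
   with N + 1 still contains 0 and still represents every m <= N (a representation of m
   uses only summands <= m <= N < a), and now represents N + 1 as well.  Its l_h would
   then exceed n_h(k).  Hence A lies in [0, N] and so does every difference a - b. *)
From mathcomp Require Import all_boot all_order.
From mathcomp Require Import finmap.
From Stdlib Require Import Classical.
Set Implicit Arguments. Unset Strict Implicit. Unset Printing Implicit Defensive.
Local Open Scope fset_scope.

Lemma mem_leq_sumn (s : seq nat) x : x \in s -> x <= sumn s.
Proof.
elim: s => //= y s IHs; rewrite inE => /predU1P [-> | /IHs x_le].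
  exact: leq_addr.
exact: leq_trans x_le (leq_addl _ _).
Qed.

Lemma sumn_leq_mul_size (s : seq nat) M :
  all (fun x => x <= M) s -> sumn s <= size s * M.
Proof.
elim: s => //= y s IHs /andP [y_le s_le].
by rewrite mulSn leq_add // IHs.
Qed.

Lemma bounded_ex_max (P : nat -> Prop) n0 B :
  P n0 -> (forall n, P n -> n <= B) -> exists l, P l /\ forall n, P n -> n <= l.
Proof.
move=> Pn0 P_le; move: {2}(B - n0) (leqnn (B - n0)) => d.
elim: d n0 Pn0 => [|d IHd] n0 Pn0 le_d.
  exists n0; split=> // n /P_le n_le; apply: leq_trans n_le _.
  by rewrite -subn_eq0 -leqn0.
have [[n [Pn lt_n0n]] | no_bigger] := classic (exists n, P n /\ n0 < n).
  apply: (IHd n Pn); rewrite -ltnS; apply: leq_trans le_d.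
  by apply: ltn_sub2l (leq_trans lt_n0n (P_le n Pn)) lt_n0n.
exists n0; split=> // n Pn; rewrite leqNgt; apply/negP => lt_n0n.
by apply: no_bigger; exists n.
Qed.

Lemma mem0_replace (A : {fset nat}) N a :
  0 \in A -> N < a -> 0 \in N.+1 |` (A `\ a).
Proof. by move=> A0 lt_Na; rewrite !inE A0 andbT; case: a lt_Na. Qed.

Lemma cardfs_replace (A : {fset nat}) a b :
  a \in A -> b \notin A -> #|` b |` (A `\ a)| = #|` A|.
Proof.
move=> aA bA; rewrite cardfsU1 in_fsetD1 (negbTE bA) andbF.
by rewrite (cardfsD1 a A) aA.
Qed.

Section Sumsets.

Variable h : nat.

Lemma in_sumset_leq_max (A : {fset nat}) m :
  in_sumset h A m -> m <= h * \max_(a <- A) a.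
Proof.
move=> [s [<- sA <-]]; apply: sumn_leq_mul_size.
by apply/allP => x /(allP sA) xA; exact: (leq_bigmax_seq (F := id) x xA).
Qed.

Lemma in_sumset_mem (A : {fset nat}) a :
  0 < h -> 0 \in A -> a \in A -> in_sumset h A a.
Proof.
move=> h_gt0 A0 aA; exists (a :: nseq h.-1 0); split.
- by rewrite /= size_nseq prednK.
- by rewrite /= aA; apply/allP => x /nseqP [-> _].
- by rewrite /= sumn_nseq addn0.
Qed.

Lemma in_sumset_sub (A B : {fset nat}) m :
  (forall x, x <= m -> x \in A -> x \in B) -> in_sumset h A m -> in_sumset h B m.
Proof.
move=> AB [s [size_s sA sum_s]]; exists s; split=> //.
apply/allP => x xs; apply: AB (allP sA x xs).
by rewrite -sum_s; exact: mem_leq_sumn.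
Qed.

Lemma interval_in_sumsetS (A : {fset nat}) n :
  interval_in_sumset h A n -> in_sumset h A n.+1 -> interval_in_sumset h A n.+1.
Proof. by move=> An An1 m; rewrite leq_eqVlt => /predU1P [-> | /An]. Qed.

Lemma interval_in_sumset0 (A : {fset nat}) : 0 \in A -> interval_in_sumset h A 0.
Proof.
move=> A0 m; rewrite leqn0 => /eqP ->; exists (nseq h 0).
by rewrite size_nseq sumn_nseq; split=> //; apply/allP => x /nseqP [-> _].
Qed.

Lemma exists_is_ell (A : {fset nat}) : 0 \in A -> exists l, is_ell h A l.
Proof.
move=> A0; have [l [Al l_max]] := bounded_ex_max (interval_in_sumset0 A0)
  (fun n An => in_sumset_leq_max (An n (leqnn n))).
by exists l.
Qed.

Lemma is_ell_succ_notin (A : {fset nat}) N :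
  0 < h -> is_ell h A N -> N.+1 \notin A.
Proof.
move=> h_gt0 [A0 [AN N_max]]; apply/negP => AN1.
have := N_max _ (interval_in_sumsetS AN (in_sumset_mem h_gt0 A0 AN1)).
by rewrite ltnn.
Qed.

Lemma interval_in_sumset_replace (A : {fset nat}) N a :
  0 < h -> 0 \in A -> N < a -> interval_in_sumset h A N ->
  interval_in_sumset h (N.+1 |` (A `\ a)) N.+1.
Proof.
move=> h_gt0 A0 lt_Na AN; apply: interval_in_sumsetS.
  move=> m le_mN; apply: in_sumset_sub (AN m le_mN) => x le_xm xA.
  rewrite !inE xA andbT; apply/orP; right; apply: contraTneq le_xm => ->.
  by rewrite -ltnNge (leq_ltn_trans le_mN).
by apply: in_sumset_mem; rewrite ?mem0_replace // !inE eqxx.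
Qed.

End Sumsets.

Lemma diam_leq (A : {fset nat}) N : (forall a, a \in A -> a <= N) -> diam A <= N.
Proof.
move=> A_le; apply/bigmax_leqP_seq => a aA _; apply/bigmax_leqP_seq => b _ _.
exact: leq_trans (leq_subr _ _) (A_le a aA).
Qed.

Theorem mainTheorem7 (h k : nat) (A : {fset nat}) (N : nat) :
  0 < h -> 0 < k -> #|` A| = k ->
  is_nh h k N -> is_ell h A N ->
  diam A <= N.
Proof.
move=> h_gt0 _ cardA [_ N_max] ellA; apply: diam_leq => a aA.
rewrite leqNgt; apply/negP => lt_Na.
have [A0 [AN _]] := ellA.
set A' := N.+1 |` (A `\ a).
have cardA' : #|` A'| = k.
  by rewrite -cardA cardfs_replace // (is_ell_succ_notin h_gt0 ellA).
have A'0 : 0 \in A' by exact: mem0_replace.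
have [l ellA'] := exists_is_ell h A'0.
have le_lN := N_max A' l cardA' ellA'.
have [_ [_ l_max]] := ellA'.
have := l_max _ (interval_in_sumset_replace h_gt0 A0 lt_Na AN).
by rewrite ltnNge le_lN.
Qed.
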